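(* Let $q$ be a prime power and let $n\ge 3$ be an odd integer. Let $f(x)$ be an irreducible monic polynomial of degree $n$ over $\mathbb{F}_{q^2}$. The following are equivalent: (1) $f(x)$ is self-conjugate-reciprocal; (2) $\mathrm{ord}(f(x))\in D_n$; (3) $f(x)=f_\beta(x):=\prod_{i=0}^{n-1}(x-\beta^{q^{2i}})$ for some primitive $d$-th root of unity $\beta$ with $d\in D_n$.
   Context: $D_n$ denotes the set of all positive divisors of $q^n+1$ that do not divide $q^k+1$ for any integer $0\le k<n$. For $f(x)\in\mathbb{F}_{q^2}[x]$ of degree $m$ with $f(0)\neq0$, the reciprocal is $f^*(x)=x^m f(0)^{-1}f(1/x)$, the conjugate of $g(x)=\sum g_ix^i$ is $\overline{g(x)}=\sum g_i^q x^i$, and the conjugate-reciprocal is $f^\dagger(x)=\overline{f^*(x)}$; $f$ is self-conjugate-reciprocal if $f=f^\dagger$. The order $\mathrm{ord}(f(x))$ is the smallest positive integer $s$ such that $f(x)$ divides $x^s-1$. *)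

From HB Require Import structures.
From mathcomp Require Import all_boot all_order all_algebra all_field.
Set Implicit Arguments. Unset Strict Implicit. Unset Printing Implicit Defensive.
Import GRing.Theory.
Local Open Scope ring_scope.

Definition inD (q n d : nat) : bool :=
  [&& (0 < d)%N, (d %| q ^ n + 1)%N & [forall k : 'I_n, ~~ (d %| q ^ k + 1)%N]].

(* Reciprocal f^*(x) = x^m f(0)^{-1} f(1/x), m = deg f. *)
Definition recip (F : fieldType) (f : {poly F}) : {poly F} :=
  (f`_0)^-1 *: \poly_(i < size f) f`_(size f - 1 - i).

Definition conjp (F : fieldType) (q : nat) (g : {poly F}) : {poly F} :=
  \poly_(i < size g) (g`_i ^+ q).

Definition conj_recip (F : fieldType) (q : nat) (f : {poly F}) : {poly F} :=
  conjp q (recip f).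

Definition self_conj_recip (F : fieldType) (q : nat) (f : {poly F}) : Prop :=
  f`_0 != 0 /\ f = conj_recip q f.

Definition is_ord (F : fieldType) (f : {poly F}) (s : nat) : Prop :=
  (0 < s)%N /\ f %| 'X^s - 1 /\
  forall t : nat, (0 < t)%N -> f %| 'X^t - 1 -> (s <= t)%N.

From HB Require Import structures.
From mathcomp Require Import all_boot all_order all_algebra all_field.
From mathcomp Require Import abelian zify.
Set Implicit Arguments. Unset Strict Implicit. Unset Printing Implicit Defensive.
Import GRing.Theory.
Local Open Scope ring_scope.

(* Let b be a root of f in an extension of F, and Q = q ^ 2 = #|F|.  As x |-> x ^ Q
   is a ring morphism fixing F, the roots of f are the b ^ (Q ^ i); the product
   over a shorter Q-orbit would have coefficients in F and be divisible by f, so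
   the orbit has exactly n elements and b ^ (Q ^ m) = b iff n | m.
   The conjugate-reciprocal of f has the root (b^-1) ^ q.  Hence if f is
   self-conjugate-reciprocal then b ^ (q ^ j) = b^-1 for some odd j; squaring
   gives b ^ (Q ^ j) = b, so j is an odd multiple of n and b ^ (q ^ n) = b^-1.
   Conversely, if b ^ (q ^ n) = b^-1 then, n being odd, (b^-1) ^ q is
   b ^ (Q ^ ((n + 1) / 2)), a root of f, so f divides its monic
   conjugate-reciprocal of the same degree.
   For the order d of b (which is ord f), b ^ (q ^ k) = b^-1 means d | q ^ k + 1,
   and this cannot happen for k < n: it would force k = 0, i.e. b = b^-1 = +-1,
   which is fixed by x |-> x ^ Q, contradicting n > 1. *)

Section PcharNatExpr.
Variables (R : comNzRingType) (m : nat).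
Hypothesis pcharRm : [pchar R].-nat m.

Definition pchar_expr of [pchar R].-nat m := fun x : R => x ^+ m.

Lemma pchar_expr_is_nmod_morphism : GRing.nmod_morphism (pchar_expr pcharRm).
Proof.
have m_gt0 : (0 < m)%N by case/andP: pcharRm.
split=> [|x y]; rewrite /pchar_expr; first by rewrite expr0n gtn_eqF.
exact: exprDn_pchar.
Qed.

Lemma pchar_expr_is_monoid_morphism : GRing.monoid_morphism (pchar_expr pcharRm).
Proof. by split=> [|x y]; rewrite /pchar_expr ?expr1n ?exprMn. Qed.

HB.instance Definition _ :=
  GRing.isNmodMorphism.Build R R (pchar_expr pcharRm) pchar_expr_is_nmod_morphism.
HB.instance Definition _ :=
  GRing.isMonoidMorphism.Build R R (pchar_expr pcharRm) pchar_expr_is_monoid_morphism.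

End PcharNatExpr.

Lemma expr_pchar_inj (R : fieldType) m : [pchar R].-nat m ->
  injective (fun x : R => x ^+ m).
Proof. by move=> pcharRm; apply: (fmorph_inj (pchar_expr pcharRm)). Qed.

Lemma pchar_nat_card (F : finFieldType) : [pchar F].-nat #|F|.
Proof.
have [p _ pcharFp] := finPcharP F.
rewrite (eq_pnat _ (pcharf_eq pcharFp)) -cardsT.
exact/abelem_pgroup/fin_ring_pchar_abelem.
Qed.

Lemma pchar_nat_card_lalg (F : finFieldType) (L : fieldExtType F) :
  [pchar L].-nat #|F|.
Proof. by rewrite (eq_pnat _ (pchar_lalg L)) pchar_nat_card. Qed.

Lemma size_prod_ord_XsubC (R : nzRingType) m (G : 'I_m -> R) :
  size (\prod_(i < m) ('X - (G i)%:P)) = m.+1.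
Proof. by rewrite size_prod_XsubC [index_enum _]unlock -enumT size_enum_ord. Qed.

Section Reciprocal.
Variable R : fieldType.
Implicit Types g : {poly R}.

Lemma size_recip g : g`_0 != 0 -> size (recip g) = size g.
Proof.
move=> g0; rewrite size_scale ?invr_eq0 // size_poly_eq //.
by rewrite -subn1 subnn.
Qed.

Lemma recip_monic g : g`_0 != 0 -> recip g \is monic.
Proof.
move=> g0; have s_gt0 : (0 < size g)%N.
  by rewrite size_poly_gt0; apply: contraNneq g0 => ->; rewrite coef0.
rewrite monicE lead_coefZ lead_coef_poly -?subn1 ?subnn ?mulVf //.
Qed.

Lemma root_recip g x : x != 0 -> root g x -> root (recip g) x^-1.
Proof.
move=> x0 /rootP gx0; apply/rootP; rewrite /recip hornerZ horner_poly.
suff -> : \sum_(i < size g) g`_(size g - 1 - i) * x^-1 ^+ i =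
          x ^- (size g).-1 * g.[x] by rewrite gx0 !mulr0.
rewrite horner_coef mulr_sumr (reindex_inj rev_ord_inj) /=; apply: eq_bigr => i _.
have i_lt := ltn_ord i.
set s := size g in i i_lt *.
have -> : (s - 1 - (s - i.+1) = i)%N by lia.
have -> : s.-1 = (s - i.+1 + i)%N by lia.
by rewrite mulrCA -exprVn exprD -mulrA -exprMn mulVf // expr1n mulr1.
Qed.

Variable m : nat.
Hypothesis pcharRm : [pchar R].-nat m.

Lemma conjpE g : conjp m g = map_poly (pchar_expr pcharRm) g.
Proof. by []. Qed.

Lemma size_conj_recip g : g`_0 != 0 -> size (conj_recip m g) = size g.
Proof. by move=> g0; rewrite /conj_recip conjpE size_map_poly size_recip. Qed.

Lemma conj_recip_monic g : g`_0 != 0 -> conj_recip m g \is monic.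
Proof. by move=> g0; rewrite /conj_recip conjpE map_monic recip_monic. Qed.

Lemma root_conj_recip g x : x != 0 -> root g x -> root (conj_recip m g) (x^-1 ^+ m).
Proof.
move=> x0 gx; apply/rootP; rewrite /conj_recip conjpE.
by rewrite (horner_map (pchar_expr pcharRm)) (rootP (root_recip x0 gx)) rmorph0.
Qed.

End Reciprocal.

Section MapReciprocal.
Variables (F K : fieldType) (phi : {rmorphism F -> K}).

Lemma map_recip g : map_poly phi (recip g) = recip (map_poly phi g).
Proof.
apply/polyP => i; rewrite coef_map /= !coefZ coef_map /= size_map_poly.
rewrite [in LHS]coef_poly [in RHS]coef_poly rmorphM fmorphV.
by case: ifP; rewrite ?coef_map ?rmorph0.
Qed.

Lemma map_conjp m g : map_poly phi (conjp m g) = conjp m (map_poly phi g).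
Proof.
apply/polyP => i; rewrite coef_map /= [in LHS]coef_poly [in RHS]coef_poly.
by rewrite size_map_poly; case: ifP; rewrite ?coef_map ?rmorphXn ?rmorph0.
Qed.

Lemma map_conj_recip m g : map_poly phi (conj_recip m g) = conj_recip m (map_poly phi g).
Proof. by rewrite /conj_recip map_conjp map_recip. Qed.

End MapReciprocal.

Lemma irredp_coef0_neq0 (R : fieldType) (g : {poly R}) :
  irreducible_poly g -> (2 < size g)%N -> g`_0 != 0.
Proof.
move=> irr_g; apply: contraTneq => g00.
have : ~~ coprimep g 'X by rewrite coprimepX negbK rootE horner_coef0 g00.
rewrite irreducible_poly_coprime // negbK => /dvdp_leq.
by rewrite polyX_eq0 size_polyX -leqNgt; apply.
Qed.

Lemma root_map_neq0 (F : fieldType) (L : fieldExtType F) (f : {poly F}) (x : L) :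
  f`_0 != 0 -> root (map_poly (in_alg L) f) x -> x != 0.
Proof.
by move=> f0; apply: contraTneq => ->; rewrite rootE horner_coef0 coef_map fmorph_eq0.
Qed.

Lemma is_ord_uniq (F : fieldType) (f : {poly F}) s t :
  is_ord f s -> is_ord f t -> s = t.
Proof.
by move=> [s_gt0 [fs s_min]] [t_gt0 [ft t_min]]; apply/eqP; rewrite eqn_leq s_min ?t_min.
Qed.

Section IrreducibleRoot.
Variables (F : fieldType) (L : fieldExtType F) (f : {poly F}) (b : L).
Hypotheses (irr_f : irreducible_poly f) (fb0 : root (map_poly (in_alg L) f) b).

Lemma irredp_dvdp_rootE g : (f %| g) = root (map_poly (in_alg L) g) b.
Proof.
apply/idP/idP => [fg | gb0]; first by apply: root_dvdp fb0; rewrite dvdp_map.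
apply: contraLR gb0; rewrite -irreducible_poly_coprime //.
by rewrite -(coprimep_map (in_alg L)) => /coprimep_root/(_ fb0).
Qed.

Lemma irredp_dvdp_Xn_sub1 s : (f %| 'X^s - 1) = (b ^+ s == 1).
Proof. by rewrite irredp_dvdp_rootE rmorphB /= map_polyXn rmorph1 -unity_rootE. Qed.

Lemma is_ord_primitive_root d : is_ord f d <-> d.-primitive_root b.
Proof.
split=> [[d_gt0 [fd d_min]] | prim_b].
  have /eqP bd1 := etrans (esym (irredp_dvdp_Xn_sub1 d)) fd.
  have [d' prim_b' d'd] := prim_order_exists d_gt0 bd1.
  suff -> : d = d' by [].
  apply/anti_leq; rewrite (dvdn_leq d_gt0 d'd) andbT.
  by apply: d_min; rewrite ?(prim_order_gt0 prim_b') ?irredp_dvdp_Xn_sub1 ?prim_expr_order.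
split; first exact: prim_order_gt0 prim_b.
split=> [|t t_gt0]; first by rewrite irredp_dvdp_Xn_sub1 prim_expr_order.
by rewrite irredp_dvdp_Xn_sub1 -(prim_order_dvd prim_b); apply: dvdn_leq.
Qed.

Lemma exists_is_ord_iff (P : nat -> Prop) d : d.-primitive_root b ->
  (exists s, is_ord f s /\ P s) <-> P d.
Proof.
move=> /is_ord_primitive_root ord_f.
by split=> [[s [ord_s]] | Pd]; [rewrite (is_ord_uniq ord_s ord_f) | exists d].
Qed.

End IrreducibleRoot.

Lemma exists_primitive_root (F : finFieldType) (L : fieldExtType F) (x : L) :
  x != 0 -> exists d, d.-primitive_root x.
Proof.
move=> x0; set e := (#|F| ^ \dim {:L})%N.
have e_gt1 : (1 < e)%N.
  apply: leq_trans (finNzRing_gt1 F) _; rewrite -{1}(expn1 #|F|).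
  by rewrite leq_pexp2l ?adim_gt0 // ltnW ?finNzRing_gt1.
have /eqP xe : x ^+ e == x by rewrite -(Fermat's_little_theorem {:L}%AS) memvf.
have xe1 : x ^+ e.-1 = 1.
  by apply: (mulIf x0); rewrite mul1r -exprSr prednK ?xe // ltnW.
have e1_gt0 : (0 < e.-1)%N by rewrite -subn1 subn_gt0.
by have [d prim_x _] := prim_order_exists e1_gt0 xe1; exists d.
Qed.

Section FrobeniusOrbit.
Variables (F : finFieldType) (L : fieldExtType F) (f : {poly F}) (n : nat) (b : L).
Hypotheses (irr_f : irreducible_poly f) (size_f : size f = n.+1).
Hypothesis fb0 : root (map_poly (in_alg L) f) b.
Local Notation fL := (map_poly (in_alg L) f).
Local Notation Q := #|F|.
Local Notation frob := (pchar_expr (pchar_nat_card_lalg L)).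

Let n_gt0 : (0 < n)%N.
Proof. by have := irr_f.1; rewrite size_f. Qed.

Lemma expr_card_alg (a : F) : (a%:A : L) ^+ Q = a%:A.
Proof. by rewrite -in_algE -rmorphXn expf_card. Qed.

Lemma root_expr_card x : root fL x -> root fL (x ^+ Q).
Proof.
have frob_fL : map_poly frob fL = fL.
  by rewrite -map_poly_comp; apply: eq_map_poly => a; apply: expr_card_alg.
by move=> /rootP fx0; apply/rootP; rewrite -frob_fL (horner_map frob) fx0 rmorph0.
Qed.

Lemma root_expr_card_iter i : root fL (b ^+ (Q ^ i)).
Proof.
elim: i => [|i IHi]; first by rewrite expr1.
by rewrite expnSr exprM root_expr_card.
Qed.

Lemma expr_card_iter_inj i : injective (fun x : L => x ^+ (Q ^ i)).
Proof. by apply: expr_pchar_inj; rewrite pnatX pchar_nat_card_lalg. Qed.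

Lemma expr_card_iter_subn (x : L) i j : (i <= j)%N ->
  x ^+ (Q ^ i) = x ^+ (Q ^ j) -> x ^+ (Q ^ (j - i)) = x.
Proof.
by move=> le_ij xij; apply: (@expr_card_iter_inj i); rewrite /= -exprM -expnD subnK.
Qed.

Lemma frob_period_ge m : (0 < m)%N -> b ^+ (Q ^ m) = b -> (n <= m)%N.
Proof.
case: m => // m _ bm.
pose g := \prod_(i < m.+1) ('X - (b ^+ (Q ^ i))%:P).
have frob_g : map_poly frob g = g.
  rewrite rmorph_prod (eq_bigr (fun i : 'I_m.+1 => 'X - (b ^+ (Q ^ i.+1))%:P)).
    rewrite /g big_ord_recr big_ord_recl /= bm expn0 expr1 mulrC.
    by congr (_ * _); apply: eq_bigr.
  by move=> i _; rewrite /= map_polyXsubC expnSr exprM.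
have /polyOver1P [g0 g0E] : g \is a polyOver 1%VS.
  apply/polyOverP => i; rewrite (Fermat's_little_theorem 1%AS) dimv1 expn1.
  by change (frob g`_i == g`_i); rewrite -coef_map frob_g.
have g0_neq0 : g0 != 0.
  by rewrite -size_poly_eq0 -(size_map_poly (in_alg L)) -g0E size_prod_ord_XsubC.
have f_g0 : f %| g0.
  rewrite (irredp_dvdp_rootE irr_f fb0) -g0E.
  by rewrite /g (bigD1 ord0) //= rootM root_XsubC expr1 eqxx.
have := dvdp_leq g0_neq0 f_g0.
by rewrite size_f -(size_map_poly (in_alg L)) -g0E size_prod_ord_XsubC.
Qed.

Lemma frob_orbit_inj i j : (i < n)%N -> (j < n)%N ->
  b ^+ (Q ^ i) = b ^+ (Q ^ j) -> i = j.
Proof.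
wlog le_ij : i j / (i <= j)%N.
  move=> wlog_ij lt_in lt_jn bij; have [le_ij | /ltnW le_ji] := leqP i j.
    exact: wlog_ij.
  by symmetry; apply: wlog_ij.
move=> _ lt_jn /(expr_card_iter_subn le_ij) bji.
have [ji0 | ji_gt0] := posnP (j - i); first lia.
by have := frob_period_ge ji_gt0 bji; lia.
Qed.

Let orbit := [seq b ^+ (Q ^ i) | i <- iota 0 n].

Lemma map_irredp_orbitE : fL = lead_coef fL *: \prod_(z <- orbit) ('X - z%:P).
Proof.
apply: all_roots_prod_XsubC.
- by rewrite size_map_poly size_f size_map size_iota.
- by apply/allP => _ /mapP [i _ ->]; apply: root_expr_card_iter.
rewrite uniq_rootsE map_inj_in_uniq ?iota_uniq // => i j.
by rewrite !mem_iota !add0n => /andP[_ lt_in] /andP[_ lt_jn]; apply: frob_orbit_inj.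
Qed.

Lemma root_map_irredp x : root fL x -> exists2 i, (i < n)%N & x = b ^+ (Q ^ i).
Proof.
have lc_neq0 : lead_coef fL != 0 by rewrite lead_coef_eq0 -size_poly_eq0 size_map_poly size_f.
rewrite map_irredp_orbitE rootZ // root_prod_XsubC => /mapP [i].
by rewrite mem_iota add0n => /andP[_ lt_in] ->; exists i.
Qed.

Lemma map_irredp_prod : f \is monic ->
  fL = \prod_(i < n) ('X - (b ^+ (Q ^ i))%:P).
Proof.
move=> monic_f; rewrite {1}map_irredp_orbitE (monicP _) ?map_monic // scale1r.
by rewrite big_map -(subn0 n) -/(index_iota 0 n) big_mkord subn0.
Qed.

Lemma frob_period : b ^+ (Q ^ n) = b.
Proof.
have [i lt_in bni] := root_map_irredp (root_expr_card_iter n).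
have bi := expr_card_iter_subn (ltnW lt_in) (esym bni).
have [ni0 | ni_gt0] := posnP (n - i); first lia.
have := frob_period_ge ni_gt0 bi; rewrite bni => le_n_ni.
by have -> : i = 0%N by lia.
Qed.

Lemma frob_fix_dvdn m : (b ^+ (Q ^ m) == b) = (n %| m)%N.
Proof.
have period_mul c : b ^+ (Q ^ (c * n)) = b.
  by elim: c => [|c IHc]; rewrite ?expr1 // mulSn expnD exprM frob_period IHc.
rewrite {1}(divn_eq m n) expnD exprM period_mul /dvdn.
have [-> | r_gt0] := posnP (m %% n); first by rewrite expr1 eqxx.
apply/negbTE/eqP => /(frob_period_ge r_gt0).
by rewrite leqNgt ltn_pmod.
Qed.

End FrobeniusOrbit.

Section SelfConjugateReciprocal.
Variables (F : finFieldType) (q n : nat) (f : {poly F}).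
Hypotheses (cardF : #|F| = (q ^ 2)%N) (n_gt1 : (1 < n)%N) (odd_n : odd n).
Hypotheses (irr_f : irreducible_poly f) (monic_f : f \is monic) (size_f : size f = n.+1).
Variables (L : fieldExtType F) (b : L).
Hypothesis fb0 : root (map_poly (in_alg L) f) b.
Local Notation fL := (map_poly (in_alg L) f).

Let pcharFq : [pchar F].-nat q.
Proof. by have := pchar_nat_card F; rewrite cardF pnatX orbF. Qed.

Let pcharLq : [pchar L].-nat q.
Proof. by rewrite (eq_pnat _ (pchar_lalg L)). Qed.

Let f0_neq0 : f`_0 != 0.
Proof. by apply: irredp_coef0_neq0; rewrite // size_f ltnS. Qed.

Let b_neq0 : b != 0.
Proof. exact: root_map_neq0 f0_neq0 fb0. Qed.

Let b_fix_dvdn := frob_fix_dvdn irr_f size_f fb0.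

Lemma expr_q2E i : b ^+ (q ^ (2 * i)) = b ^+ (#|F| ^ i).
Proof. by rewrite cardF expnM. Qed.

Lemma map_irredp_prod_q : fL = \prod_(i < n) ('X - (b ^+ (q ^ (2 * i)))%:P).
Proof.
by under eq_bigr do rewrite expr_q2E; apply: map_irredp_prod.
Qed.

Lemma expr_q_inv_dvdn j : b ^+ (q ^ j) = b^-1 -> (n %| j)%N.
Proof.
move=> bj; rewrite -b_fix_dvdn cardF -expnM mul2n -addnn expnD exprM.
by rewrite bj exprVn bj invrK.
Qed.

Lemma b_neq_inv : b != b^-1.
Proof.
apply/eqP => bV; have : b ^+ 2 == 1 by rewrite expr2 {1}bV mulVf.
rewrite sqrf_eq1 => b_pm1.
have /eqP : b ^+ #|F| = b.
  case/orP: b_pm1 => /eqP ->; rewrite ?expr1n // exprNn_pchar ?expr1n //.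
  exact: pchar_nat_card_lalg.
rewrite -[#|F|]expn1 b_fix_dvdn dvdn1 => /eqP n1.
by move: n_gt1; rewrite n1.
Qed.

Lemma inD_primitive_rootE d : d.-primitive_root b ->
  inD q n d = (b ^+ (q ^ n) == b^-1).
Proof.
move=> prim_b.
have dvd_inv k : (d %| q ^ k + 1)%N = (b ^+ (q ^ k) == b^-1).
  rewrite (prim_order_dvd prim_b) addn1 exprSr.
  by rewrite -(inj_eq (mulIf (invr_neq0 b_neq0))) mulfK // mul1r.
rewrite /inD (prim_order_gt0 prim_b) dvd_inv /=; case: eqP => //= _.
apply/forallP => k; rewrite dvd_inv; apply/eqP => bk.
have [k0 | k_gt0] := posnP k.
  by move: bk; rewrite k0 expr1 => /eqP; rewrite (negbTE b_neq_inv).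
by have := dvdn_leq k_gt0 (expr_q_inv_dvdn bk); rewrite leqNgt ltn_ord.
Qed.

Lemma self_conj_recipE : self_conj_recip q f <-> b ^+ (q ^ n) = b^-1.
Proof.
have root_scr : root (map_poly (in_alg L) (conj_recip q f)) (b^-1 ^+ q).
  by rewrite map_conj_recip; apply: root_conj_recip.
split=> [[_ f_scr] | bn].
  move: root_scr; rewrite -f_scr => /(root_map_irredp irr_f size_f fb0) [i lt_in bVq].
  (* Shifting i by the period n makes 2 * i positive, so that one factor q
     of the exponent can be cancelled. *)
  pose j := (2 * (i + n).-1).+1.
  have bj : b ^+ (q ^ j) = b^-1.
    apply: (expr_pchar_inj pcharLq); rewrite /= bVq -exprM -expnSr.
    have -> : j.+1 = (2 * (i + n))%N by rewrite /j; lia.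
    by rewrite expr_q2E addnC expnD exprM (frob_period irr_f size_f fb0).
  have [c j_cn] := dvdnP (expr_q_inv_dvdn bj).
  have : odd j by rewrite /j /= oddM.
  rewrite j_cn oddM => /andP[odd_c _].
  move: bj; rewrite j_cn -(odd_double_half c) odd_c /= add1n mulSn addnC.
  rewrite -mul2n -mulnA expnD exprM expr_q2E.
  by have /eqP -> : b ^+ (#|F| ^ (c./2 * n)) == b by rewrite b_fix_dvdn dvdn_mull.
split=> //; apply/eqP.
have n1_even : n.+1 = (2 * n.+1./2)%N.
  by rewrite mul2n -{1}(odd_double_half n.+1) /= odd_n.
have root_fL : root fL (b^-1 ^+ q).
  by rewrite -bn -exprM -expnSr n1_even expr_q2E root_expr_card_iter.
have f_scr : f %| conj_recip q f by rewrite (irredp_dvdp_rootE irr_f root_fL).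
rewrite -eqp_monic ?conj_recip_monic // -dvdp_size_eqp //.
by rewrite size_conj_recip.
Qed.

Lemma self_conj_recip_inD d : d.-primitive_root b ->
  self_conj_recip q f <-> inD q n d.
Proof.
move=> prim_b; rewrite (inD_primitive_rootE prim_b) self_conj_recipE.
exact: rwP eqP.
Qed.

Lemma exists_prod_form_inD d : d.-primitive_root b ->
  (exists (L' : fieldExtType F) (beta : L') (d' : nat),
     [/\ inD q n d', d'.-primitive_root beta &
         map_poly (in_alg L') f = \prod_(i < n) ('X - (beta ^+ (q ^ (2 * i)))%:P)])
  <-> inD q n d.
Proof.
move=> prim_b; split=> [[L' [beta [d' [inD_d' prim_beta f_prod]]]] | inD_d].
  have beta_root : root (map_poly (in_alg L') f) beta.
    by rewrite f_prod (bigD1 (Ordinal (ltnW n_gt1))) //= rootM root_XsubC expr1 eqxx.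
  have ord_d' : is_ord f d' by apply/(is_ord_primitive_root irr_f beta_root).
  have ord_d : is_ord f d by apply/(is_ord_primitive_root irr_f fb0).
  by rewrite -(is_ord_uniq ord_d' ord_d).
by exists L, b, d; split; rewrite // map_irredp_prod_q.
Qed.

End SelfConjugateReciprocal.

Theorem mainTheorem9 (q : nat) (F : finFieldType) (n : nat) (f : {poly F}) :
  (exists p k : nat, [/\ prime p, (0 < k)%N & q = (p ^ k)%N]) ->
  #|F| = (q ^ 2)%N ->
  (3 <= n)%N -> odd n ->
  irreducible_poly f -> f \is monic -> size f = n.+1 ->
  [/\ (self_conj_recip q f <-> exists s : nat, is_ord f s /\ inD q n s),
      ((exists s : nat, is_ord f s /\ inD q n s) <->
        exists (L : fieldExtType F) (beta : L) (d : nat),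
          [/\ inD q n d, d.-primitive_root beta &
              map_poly (in_alg L) f =
                \prod_(i < n) ('X - (beta ^+ (q ^ (2 * i)))%:P)])
    & (self_conj_recip q f <->
        exists (L : fieldExtType F) (beta : L) (d : nat),
          [/\ inD q n d, d.-primitive_root beta &
              map_poly (in_alg L) f =
                \prod_(i < n) ('X - (beta ^+ (q ^ (2 * i)))%:P)])].
Proof.
(* q is a prime power because q ^ 2 = #|F| is. *)
move=> _ cardF n_ge3 odd_n irr_f monic_f size_f.
have n_gt1 : (1 < n)%N by apply: ltnW.
have [L _ [b fb0 _]] := irredp_FAdjoin irr_f.
have f0_neq0 : f`_0 != 0 by apply: irredp_coef0_neq0; rewrite // size_f.
have [d prim_b] := exists_primitive_root (root_map_neq0 f0_neq0 fb0).
have scr_iff := self_conj_recip_inD cardF n_gt1 odd_n irr_f monic_f size_f fb0 prim_b.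
have ord_iff := exists_is_ord_iff irr_f fb0 (fun s => inD q n s) prim_b.
have prod_iff := exists_prod_form_inD cardF n_gt1 irr_f monic_f size_f fb0 prim_b.
split; [exact: iff_trans scr_iff (iff_sym ord_iff)
       | exact: iff_trans ord_iff (iff_sym prod_iff)
       | exact: iff_trans scr_iff (iff_sym prod_iff)].
Qed.
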